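(* Let $\mathbf{x}$ be a feasible solution of $\textsc{Node-MC-Rel}$. Choose $\ell$ uniformly at random from $\{1,\dots,k\}$ and, independently, $\theta$ uniformly at random from $(0,1/2)$, and let $C=C(\ell,\theta)=\bigcup_{i\neq\ell}B^+(s_i,\theta)$. Then for every $v\in V$, $\Pr[v\in C]\le 2(1-1/k)\,x_v$.
   Context: $G=(V,E)$ is an undirected graph with non-negative node weights $w_v$ and terminal set $S=\{s_1,\dots,s_k\}$, $k\ge2$, forming an independent set. For $i<j$, $\mathcal{P}_{ij}$ is the set of paths between $s_i$ and $s_j$. $\textsc{Node-MC-Rel}$: minimize $\sum_{v\in V\setminus S}w_vx_v$ s.t. $\sum_{v\in p}x_v\ge1$ for all $p\in\mathcal{P}_{ij}$, $i<j$ (sum over all vertices of $p$ including endpoints), $x_v=0$ for $v\in S$, $x\ge0$. $d(a,b)$ is the minimum over paths from $a$ to $b$ of the sum of $x$ over all vertices of the path including both endpoints. $B(u,r)=\{v:d(u,v)\le r\}$; $B^+(u,r)$ is the set of nodes not in $B(u,r)$ adjacent to some node of $B(u,r)$. *)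

From Stdlib Require Import Reals ClassicalEpsilon.
From mathcomp Require Import all_boot.
Set Implicit Arguments. Unset Strict Implicit. Unset Printing Implicit Defensive.

Section Defs.
Variable V : finType.
Variable adj : rel V.
Variable x : V -> R.

Definition simple_path (a b : V) (p : seq V) : bool :=
  [&& path adj a p, last a p == b & uniq (a :: p)].

Definition path_len (a : V) (p : seq V) : R := foldr (fun u acc => Rplus (x u) acc) R0 (a :: p).

(* v \in B(u,r)  <->  d(u,v) <= r, where d(u,v) is the minimum of path_len over
   the (finitely many) simple paths from u to v (d = +oo if there is none) *)
Definition in_ball (u : V) (r : R) (v : V) : Prop :=
  exists p : seq V, simple_path u v p /\ Rle (path_len u p) r.

Definition in_ball_plus (u : V) (r : R) (v : V) : Prop :=
  ~ in_ball u r v /\ exists w : V, adj w v /\ in_ball u r w.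

Definition feasible (k : nat) (s : 'I_k -> V) : Prop :=
  (forall v, Rle R0 (x v)) /\ (forall i, x (s i) = R0) /\
  (forall i j : 'I_k, i <> j -> forall p, simple_path (s i) (s j) p ->
     Rle R1 (path_len (s i) p)).

Definition in_cut (k : nat) (s : 'I_k -> V) (l : 'I_k) (theta : R) (v : V) : Prop :=
  exists i : 'I_k, i <> l /\ in_ball_plus (s i) theta v.
End Defs.

Definition indic (P : Prop) : R :=
  if excluded_middle_informative P then R1 else R0.

(* Let m be the x-length of a shortest path from v to a terminal, say to s_i0.
   If v is in B^+(s_i, theta), the ball path to a neighbour of v extends to v, so
   m - x_v <= theta; for i = i0 moreover theta < m; and for j <> i0, continuing
   back along the shortest path to s_i0 gives an s_j-s_i0 path, so theta + m >= 1
   by feasibility.  If m <= 1/2, only s_i0 can cut v, for at most k - 1 values of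
   l and on a theta-interval of length at most x_v.  If m > 1/2, either only s_i0
   cuts v (k - 1 values of l, theta in [m - x_v, 1/2)), or two terminals do, which
   needs theta >= max(m - x_v, 1 - m) and accounts for at most k <= 2 (k - 1)
   values of l; the two intervals have total length at most x_v.  Integrating
   against the density 2/k gives 2 (1 - 1/k) x_v. *)
From Stdlib Require Import Reals ClassicalEpsilon Lra.
From mathcomp Require Import all_boot.
From Coquelicot Require Import Coquelicot.
Set Implicit Arguments. Unset Strict Implicit. Unset Printing Implicit Defensive.
Open Scope R_scope.

Definition Rleb (c t : R) : bool := if Rle_dec c t then true else false.

Lemma RlebP c t : reflect (c <= t) (Rleb c t).
Proof. by rewrite /Rleb; case: Rle_dec => h; constructor. Qed.

Lemma ex_RInt_threshold_pattern (I : Type) (g : I -> R) (cs : seq I)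
    (F : seq bool -> R) a b : a <= b ->
  ex_RInt (fun t => F [seq Rleb (g c) t | c <- cs]) a b.
Proof.
elim: cs F a b => [|c cs IH] F a b hab /=; first exact: ex_RInt_const.
set c' := Rmax a (Rmin (g c) b).
have [hac' hc'b] : a <= c' <= b by rewrite /c' /Rmax /Rmin; repeat case: Rle_dec; lra.
apply: (ex_RInt_Chasles _ a c' b).
- apply: ex_RInt_ext (IH (fun l => F (false :: l)) a c' hac').
  move=> t; rewrite Rmin_left // Rmax_right // => -[ht1 ht2].
  case: RlebP => // hc; exfalso.
  by move: ht1 ht2 hc; rewrite /c' /Rmax /Rmin; repeat case: Rle_dec; lra.
- apply: ex_RInt_ext (IH (fun l => F (true :: l)) c' b hc'b).
  move=> t; rewrite Rmin_left // Rmax_right // => -[ht1 ht2].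
  case: RlebP => // hc; exfalso.
  by move: ht1 ht2 hc; rewrite /c' /Rmax /Rmin; repeat case: Rle_dec; lra.
Qed.

(* A function that only depends on which of finitely many thresholds lie below
   its argument is a step function, hence integrable. *)
Lemma ex_RInt_thresholds (I : Type) (g : I -> R) (cs : seq I) (f : R -> R) a b :
  a <= b ->
  (forall t t', [seq Rleb (g c) t | c <- cs] = [seq Rleb (g c) t' | c <- cs] ->
     f t = f t') ->
  ex_RInt f a b.
Proof.
move=> hab hf; pose pattern t := [seq Rleb (g c) t | c <- cs].
pose F l := f (epsilon (inhabits 0) (fun t => pattern t = l)).
apply: ex_RInt_ext (ex_RInt_threshold_pattern g cs F hab) => t _.
apply: hf; apply: (epsilon_spec (inhabits 0) (fun t0 => pattern t0 = pattern t)).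
by exists t.
Qed.

Lemma indic_iff (P Q : Prop) : (P <-> Q) -> indic P = indic Q.
Proof.
rewrite /indic => h; case: excluded_middle_informative => hP;
  case: excluded_middle_informative => hQ //; exfalso; tauto.
Qed.

Lemma indic01 (P : Prop) : 0 <= indic P <= 1.
Proof. rewrite /indic; case: excluded_middle_informative => ? /=; lra. Qed.

Definition heaviside (c t : R) : R := indic (c <= t).

Lemma heaviside_ge c t : c <= t -> heaviside c t = 1.
Proof. by rewrite /heaviside /indic; case: excluded_middle_informative. Qed.

Lemma heaviside_lt c t : t < c -> heaviside c t = 0.
Proof. by rewrite /heaviside /indic => h; case: excluded_middle_informative => // ?; lra. Qed.

Lemma heaviside01 c t : 0 <= heaviside c t <= 1.
Proof. exact: indic01. Qed.

Lemma heaviside_anti a b t : a <= b -> heaviside b t <= heaviside a t.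
Proof.
move=> hab; case: (Rle_dec b t) => h.
  rewrite !heaviside_ge; lra.
rewrite heaviside_lt; [have := heaviside01 a t; lra | lra].
Qed.

Lemma ex_RInt_heaviside c a b : a <= b -> ex_RInt (heaviside c) a b.
Proof.
move=> hab; apply: (@ex_RInt_thresholds _ id [:: c]) => // t t' [e].
by apply: indic_iff; split => /RlebP h; apply/RlebP; rewrite ?e // -e.
Qed.

Lemma RInt_heaviside c a b : a <= b ->
  RInt (heaviside c) a b = b - Rmax a (Rmin c b).
Proof.
move=> hab; set c' := Rmax a (Rmin c b).
have [hac' hc'b] : a <= c' <= b by rewrite /c' /Rmax /Rmin; repeat case: Rle_dec; lra.
rewrite -(RInt_Chasles _ a c' b); try exact: ex_RInt_heaviside.
rewrite (RInt_ext _ (fun _ => 0) a c'); last first.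
  move=> t; rewrite Rmin_left // Rmax_right // => -[ht1 ht2].
  apply: heaviside_lt; move: ht2; rewrite /c' /Rmax /Rmin; repeat case: Rle_dec; lra.
rewrite (RInt_ext _ (fun _ => 1) c' b); last first.
  move=> t; rewrite Rmin_left // Rmax_right // => -[ht1 ht2].
  apply: heaviside_ge; move: ht1; rewrite /c' /Rmax /Rmin; repeat case: Rle_dec; lra.
rewrite !RInt_const /scal /= /mult /= /plus /=; ring.
Qed.

Definition cut_profile (a m : R) : R -> R :=
  if Rle_dec m (/2) then fun t => heaviside (m - a) t - heaviside m t
  else fun t => heaviside (m - a) t + heaviside (Rmax (m - a) (1 - m)) t.

Lemma cut_profile_ge0 a m t : 0 <= a -> 0 <= cut_profile a m t.
Proof.
move=> ha; rewrite /cut_profile; case: Rle_dec => ? /=.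
  have : heaviside m t <= heaviside (m - a) t by apply: heaviside_anti; lra.
  lra.
have := heaviside01 (m - a) t; have := heaviside01 (Rmax (m - a) (1 - m)) t; lra.
Qed.

Lemma RInt_cut_profile a m : 0 <= a ->
  ex_RInt (cut_profile a m) 0 (/2) /\ RInt (cut_profile a m) 0 (/2) <= a.
Proof.
move=> ha; have h2 : 0 <= /2 by lra.
have ex c := ex_RInt_heaviside c h2.
rewrite /cut_profile; case: Rle_dec => hm /=; split.
- exact: ex_RInt_minus.
- rewrite RInt_minus // !RInt_heaviside // /minus /plus /opp /=.
  by rewrite /Rmax /Rmin; repeat case: Rle_dec; lra.
- exact: ex_RInt_plus.
- rewrite RInt_plus // !RInt_heaviside // /plus /=.
  by rewrite /Rmax /Rmin; repeat case: Rle_dec; lra.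
Qed.

Section Walks.
Variables (V : finType) (adj : rel V) (x : V -> R).
Hypothesis x_ge0 : forall u, 0 <= x u.

Definition weight (l : seq V) : R := foldr (fun u acc => x u + acc) 0 l.

Lemma path_lenE a p : path_len x a p = weight (a :: p).
Proof. by []. Qed.

Lemma weight_cat l1 l2 : weight (l1 ++ l2) = weight l1 + weight l2.
Proof. elim: l1 => /= [|a l IH]; rewrite ?IH; ring. Qed.

Lemma weight_rev l : weight (rev l) = weight l.
Proof.
elim: l => //= a l IH; rewrite rev_cons -cats1 weight_cat IH /=; ring.
Qed.

Lemma weight_ge0 l : 0 <= weight l.
Proof. elim: l => /= [|a l IH]; [lra | have := x_ge0 a; lra]. Qed.

Lemma weight_rem a l : a \in l -> weight l = x a + weight (rem a l).
Proof.
elim: l => //= b l IH; rewrite inE eq_sym.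
by case: eqP => [-> | _] //= /IH ->; ring.
Qed.

Lemma weight_subset l' l : uniq l' -> {subset l' <= l} -> weight l' <= weight l.
Proof.
elim: l' l => /= [|a l' IH] l; first by move=> *; apply: weight_ge0.
move=> /andP[al' ul'] sub.
have al : a \in l by apply: sub; rewrite mem_head.
rewrite (weight_rem al); suff : weight l' <= weight (rem a l) by lra.
apply: IH => // b bl'; apply: rem_mem; first by apply: contraNneq al' => <-.
by apply: sub; rewrite inE bl' orbT.
Qed.

Lemma simple_path_of_walk a p : path adj a p ->
  exists2 p', simple_path adj a (last a p) p' & path_len x a p' <= path_len x a p.
Proof.
move=> hp; case: (shortenP hp) => p' hp' up' sub.
exists p'; first by rewrite /simple_path hp' eqxx up'.
by rewrite !path_lenE; apply: weight_subset => // u; rewrite !inE => /orP[-> | /sub ->];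
  rewrite ?orbT.
Qed.

Hypothesis adj_sym : symmetric adj.

(* Walk from [a] through the ball to a neighbour of [v], then back along [q]. *)
Lemma ball_plus_detour a b t v q : in_ball_plus adj x a t v ->
  simple_path adj b v q ->
  exists2 p, simple_path adj a b p & path_len x a p <= t + path_len x b q.
Proof.
case=> _ [w [hwv [p [/and3P[hp /eqP hpw _] hl]]]] /and3P[hq /eqP hqv _].
have hrev : rev (b :: q) = v :: rev (seq.belast b q) by rewrite lastI rev_rcons hqv.
have hwalk : path adj a (p ++ rev (b :: q)).
  rewrite cat_path hp hpw hrev /= hwv /= -{1}hqv rev_path.
  by rewrite (@eq_path _ _ adj) // => c d; rewrite /= adj_sym.
have [p' hp' hl'] := simple_path_of_walk hwalk.
exists p'; first by rewrite last_cat rev_cons last_rcons in hp'.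
move: hl' hl; rewrite !path_lenE -cat_cons weight_cat weight_rev; lra.
Qed.

Lemma ball_plus_reach a t v : in_ball_plus adj x a t v ->
  exists2 p, simple_path adj a v p & path_len x a p <= t + x v.
Proof.
have hv : simple_path adj v v [::] by rewrite /simple_path /= eqxx.
move=> /ball_plus_detour /(_ hv) [p hp hl].
by exists p => //; move: hl; rewrite !path_lenE /=; lra.
Qed.

End Walks.

Definition short_seqs (V : finType) (n : nat) : seq (seq V) :=
  [seq tval p | m <- seq.iota 0 n, p <- enum {: m.-tuple V}].

Lemma mem_short_seqs (V : finType) n (p : seq V) : (size p < n)%N -> p \in short_seqs V n.
Proof.
move=> hp; apply/allpairsPdep; exists (size p), (in_tuple p).
by rewrite mem_iota add0n hp mem_enum.
Qed.

Lemma exists_seq_argmin (T : eqType) (g : T -> R) (l : seq T) a0 : a0 \in l ->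
  exists2 a, a \in l & forall b, b \in l -> g a <= g b.
Proof.
elim: l a0 => // c l IH a0 _; case: l IH => [|d l] IH.
  by exists c => [|b]; rewrite ?mem_head // inE => /eqP->; lra.
have [a al ha] := IH d (mem_head _ _).
case: (Rle_dec (g c) (g a)) => h.
  by exists c => [|b]; rewrite ?mem_head // inE => /orP[/eqP-> | /ha]; lra.
exists a => [|b]; first by rewrite inE al orbT.
by rewrite inE => /orP[/eqP-> | /ha]; lra.
Qed.

Section Finiteness.
Variables (V : finType) (adj : rel V) (x : V -> R).

Lemma simple_path_size a b p : simple_path adj a b p -> (size p < #|V|)%N.
Proof.
by case/and3P => _ _ /card_uniqP h; have := max_card (mem (a :: p)); rewrite h.
Qed.

Lemma nearest_source (I : finType) (src : I -> V) y :
  (forall i p, ~ simple_path adj (src i) y p) \/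
  exists i0 q, simple_path adj (src i0) y q /\
    forall i p, simple_path adj (src i) y p -> path_len x (src i0) q <= path_len x (src i) p.
Proof.
have [paths mem_paths path_of] : exists2 paths : seq (I * seq V),
    forall i p, simple_path adj (src i) y p -> (i, p) \in paths &
    forall ip, ip \in paths -> simple_path adj (src ip.1) y ip.2.
  exists [seq ip <- [seq (i, p) | i <- enum I, p <- short_seqs V #|V|]
         | simple_path adj (src ip.1) y ip.2]; last by move=> ip; rewrite mem_filter => /andP[].
  move=> i p h; rewrite mem_filter /= h; apply: allpairs_f; first by rewrite mem_enum.
  exact/mem_short_seqs/(simple_path_size h).
case: paths mem_paths path_of => [|ip0 paths] mem_paths path_of.
  by left => i p /mem_paths.
right; have [[i0 q] hin hmin] :=
  exists_seq_argmin (fun ip : I * seq V => path_len x (src ip.1) ip.2) (mem_head ip0 paths).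
by exists i0, q; split => [|i p /mem_paths /hmin //]; apply: path_of hin.
Qed.

Definition length_thresholds : seq (V * seq V) :=
  [seq (u, p) | u <- enum V, p <- short_seqs V #|V|].

Section SamePattern.
Variables t t' : R.
Hypothesis same : [seq Rleb (path_len x c.1 c.2) t | c <- length_thresholds] =
                  [seq Rleb (path_len x c.1 c.2) t' | c <- length_thresholds].

Lemma in_ball_same_pattern u y : in_ball adj x u t y -> in_ball adj x u t' y.
Proof.
case=> p [hp /RlebP hl]; exists p; split => //; apply/RlebP.
suff /((eq_in_map _ _ _).2 same) /= <- : (u, p) \in length_thresholds by [].
apply: allpairs_f; first by rewrite mem_enum.
exact/mem_short_seqs/(simple_path_size hp).
Qed.

End SamePattern.

Lemma in_cut_same_pattern k (s : 'I_k -> V) l t t' y :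
  [seq Rleb (path_len x c.1 c.2) t | c <- length_thresholds] =
  [seq Rleb (path_len x c.1 c.2) t' | c <- length_thresholds] ->
  in_cut adj x s l t y -> in_cut adj x s l t' y.
Proof.
move=> same [i [hil [hnb [w [hwv hb]]]]]; exists i; split => //; split.
  by move/(in_ball_same_pattern (esym same)).
by exists w; split => //; apply: in_ball_same_pattern hb.
Qed.

End Finiteness.

Section IndicSum.
Variables (T : eqType) (P : T -> Prop).

Definition indic_sum (ls : seq T) : R := foldr (fun l acc => indic (P l) + acc) 0 ls.

Lemma indic_sum_le_size ls : indic_sum ls <= INR (size ls).
Proof.
elim: ls => [|l ls IH]; first by rewrite /=; lra.
rewrite [size _]/= S_INR; have := indic01 (P l); rewrite /=; lra.
Qed.

Lemma indic_sum_le_size_pred ls l : l \in ls -> ~ P l -> indic_sum ls <= INR (size ls) - 1.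
Proof.
elim: ls => // l' ls IH; rewrite [size _]/= S_INR inE /= => /orP[/eqP<- | /IH h] hl.
  rewrite /indic; case: excluded_middle_informative => // ? /=.
  have := indic_sum_le_size ls; lra.
have := h hl; have := indic01 (P l'); lra.
Qed.

Lemma indic_sum_eq0 ls : (forall l, ~ P l) -> indic_sum ls = 0.
Proof.
move=> none; elim: ls => //= l ls ->; rewrite /indic.
by case: excluded_middle_informative => [/none | ? /=] //; rewrite Rplus_0_l.
Qed.

End IndicSum.

Section CutCount.
Variables (V : finType) (adj : rel V) (k : nat) (s : 'I_k -> V) (x : V -> R) (v : V).
Hypotheses (adj_sym : symmetric adj) (hk : (2 <= k)%N) (hx : feasible adj x s).

Let x_ge0 : forall u, 0 <= x u := proj1 hx.
Let hk2 : 2 <= INR k := le_INR 2 k (elimT leP hk).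

Definition cut_count (t : R) : R := indic_sum (fun l => in_cut adj x s l t v) (enum 'I_k).

Lemma ex_RInt_cut_count c a b : a <= b -> ex_RInt (fun t => c * cut_count t) a b.
Proof.
move=> hab; apply: (@ex_RInt_thresholds _ (fun up : V * seq V => path_len x up.1 up.2)
  (length_thresholds V) _ a b hab) => t t' same.
congr (_ * _); rewrite /cut_count; elim: (enum 'I_k) => //= l ls ->.
by congr (_ + _); apply: indic_iff; split; apply: in_cut_same_pattern.
Qed.

Section Nearest.
Variables (i0 : 'I_k) (q : seq V).
Hypothesis hq : simple_path adj (s i0) v q.
Hypothesis hmin : forall i p, simple_path adj (s i) v p ->
  path_len x (s i0) q <= path_len x (s i) p.
Let m := path_len x (s i0) q.

Lemma ball_plus_nearest_lower i t : in_ball_plus adj x (s i) t v -> m - x v <= t.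
Proof. by move=> /(ball_plus_reach x_ge0 adj_sym) [p /hmin]; rewrite -/m; lra. Qed.

Lemma ball_plus_nearest_upper t : in_ball_plus adj x (s i0) t v -> t < m.
Proof. by case=> hnb _; apply: Rnot_le_lt => h; apply: hnb; exists q. Qed.

Lemma ball_plus_other_lower j t : in_ball_plus adj x (s j) t v -> j <> i0 -> 1 <= t + m.
Proof.
move=> hPj hj; have [p hp hl] := ball_plus_detour x_ge0 adj_sym hPj hq.
by have := proj2 (proj2 hx) _ _ hj _ hp; rewrite /m; lra.
Qed.

Lemma cut_count_le_profile t : 0 < t < /2 ->
  cut_count t <= (INR k - 1) * cut_profile (x v) m t.
Proof.
move=> ht; have hx_v := x_ge0 v.
case: (classic (exists l, in_cut adj x s l t v)) => [[l0 [i [_ hi]]] | none]; last first.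
  rewrite /cut_count indic_sum_eq0; last by move=> l hl; apply: none; exists l.
  by apply: Rmult_le_pos; [lra | apply: cut_profile_ge0].
have hlow := heaviside_ge (ball_plus_nearest_lower hi).
case: (classic (exists2 j, j <> i0 & in_ball_plus adj x (s j) t v)) => [[j hj hPj] | nj].
  have h1 := ball_plus_other_lower hPj hj; have h2 := ball_plus_nearest_lower hPj.
  rewrite /cut_profile; case: Rle_dec => [| _] /=; first lra.
  rewrite hlow heaviside_ge; last by apply: Rmax_lub; lra.
  have := indic_sum_le_size (fun l => in_cut adj x s l t v) (enum 'I_k).
  rewrite size_enum_ord /cut_count; lra.
have hprofile : 1 <= cut_profile (x v) m t.
  have hi0 : i = i0 by apply: NNPP => hne; apply: nj; exists i.
  rewrite /cut_profile; case: Rle_dec => /= _; rewrite hlow.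
    by rewrite heaviside_lt; [lra | apply: ball_plus_nearest_upper; rewrite -hi0].
  by have := heaviside01 (Rmax (m - x v) (1 - m)) t; lra.
have hni : ~ in_cut adj x s i0 t v by case=> j [hj hPj]; apply: nj; exists j.
have := @indic_sum_le_size_pred _ (fun l => in_cut adj x s l t v) (enum 'I_k) _ (mem_enum _ i0) hni.
rewrite size_enum_ord /cut_count; nra.
Qed.
End Nearest.

Lemma cut_count_bound : exists m, forall t, 0 < t < /2 ->
  cut_count t <= (INR k - 1) * cut_profile (x v) m t.
Proof.
case: (nearest_source adj x s v) => [none | [i0 [q [hq hmin]]]]; last first.
  by exists (path_len x (s i0) q) => t; apply: (cut_count_le_profile hq hmin).
exists 0 => t _; rewrite /cut_count indic_sum_eq0.
  by apply: Rmult_le_pos; [lra | apply: cut_profile_ge0].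
by move=> l [i [_ /(ball_plus_reach x_ge0 adj_sym) [p /none]]].
Qed.

End CutCount.

(* Symmetry of [adj] and feasibility of [x] are all the argument uses. *)
Theorem mainTheorem10 (V : finType) (adj : rel V)
  (adj_sym : symmetric adj) (adj_irr : irreflexive adj)
  (k : nat) (hk : (2 <= k)%N) (s : 'I_k -> V) (s_inj : injective s)
  (s_indep : forall i j : 'I_k, ~~ adj (s i) (s j))
  (x : V -> R) (hx : feasible adj x s) (v : V) :
  exists pr : Riemann_integrable
      (fun theta => Rmult (Rmult 2 (Rinv (INR k)))
         (foldr (fun l acc => Rplus (indic (in_cut adj x s l theta v)) acc) R0 (enum 'I_k)))
      R0 (Rinv 2),
    Rle (RiemannInt pr) (Rmult (Rmult 2 (Rminus R1 (Rinv (INR k)))) (x v)).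
Proof.
have hk2 : 2 <= INR k by apply: (le_INR 2); apply/leP.
have hf : ex_RInt (fun t => 2 * / INR k * cut_count adj s x v t) 0 (/2).
  by apply: ex_RInt_cut_count; lra.
exists (ex_RInt_Reals_0 _ _ _ hf); rewrite -RInt_Reals.
have [m hm] := cut_count_bound v adj_sym hk hx.
have [hp hpI] := RInt_cut_profile m (proj1 hx v).
have hc : 2 * / INR k * (INR k - 1) = 2 * (1 - / INR k) by field; lra.
have hc0 : 0 <= 2 * (1 - / INR k).
  have : / INR k <= / 2 by apply: Rinv_le_contravar; lra.
  lra.
apply: Rle_trans (RInt_le _ (fun t => 2 * (1 - / INR k) * cut_profile (x v) m t) _ _ _
  hf (ex_RInt_scal _ _ _ _ hp) _) _; first lra.
  move=> t /hm ht; have hk0 : 0 <= 2 * / INR k.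
    by apply: Rmult_le_pos; [lra | apply/Rlt_le/Rinv_0_lt_compat; lra].
  by apply: Rle_trans (Rmult_le_compat_l _ _ _ hk0 ht) _; rewrite -hc; right; ring.
by rewrite RInt_scal // /scal /= /mult /=; apply: Rmult_le_compat_l.
Qed.
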